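(* Let $G$ be a strongly connected weighted digraph and consider a finite number of tokens initially located at some of its nodes. Suppose that, at each iteration, each node that possesses a token passes it to one of its out-neighbors via an out-edge of minimum weight (among its out-edges) and adds a positive constant to the weight of that edge. Then after a finite number of iterations every node has been visited by (i.e., has held) at least one token.
   Context: A weighted digraph $G=(V,E,A)$ has finite vertex set $V$, edge set $E\subseteq V\times V$, and positive weights $a_{ij}$ on the edges $(v_i,v_j)\in E$. It is strongly connected if there is a directed path between every ordered pair of distinct vertices. An out-neighbor of $v$ is a vertex $w$ with $(v,w)\in E$. *)

From HB Require Import structures.
From mathcomp Require Import all_boot all_order all_algebra.
From mathcomp Require Import reals.
Set Implicit Arguments. Unset Strict Implicit. Unset Printing Implicit Defensive.
Import Order.TTheory GRing.Theory Num.Theory.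
Local Open Scope ring_scope.

(* A weighted digraph: finite vertex type V, edge relation E, weights a
   (only the values on edges matter), positive on edges. *)
Definition positive_weights (R : realType) (V : finType) (E : rel V)
  (a : V -> V -> R) : Prop :=
  forall i j, E i j -> 0 < a i j.

Definition strongly_connected (V : finType) (E : rel V) : Prop :=
  forall x y, x != y -> connect E x y.

(* W t  : edge weights before iteration t (W 0 = a),
   S t  : set of nodes holding a token before iteration t,
   nxt t v : out-neighbour to which v passes its token at iteration t.
   Each token-holding node v passes along an out-edge of minimum current
   weight (ties broken arbitrarily), and that edge's weight increases by c. *)
Definition token_run (R : realType) (V : finType) (E : rel V)
  (a : V -> V -> R) (c : R) (S0 : {set V})
  (W : nat -> V -> V -> R) (S : nat -> {set V}) (nxt : nat -> V -> V) : Prop :=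
  [/\ W 0%N = a, S 0%N = S0,
      (forall t v, v \in S t ->
         E v (nxt t v) /\ (forall u, E v u -> W t v (nxt t v) <= W t v u)),
      (forall t, S t.+1 = [set nxt t v | v in S t]) &
      (forall t i j, W t.+1 i j =
         W t i j + (if (i \in S t) && (j == nxt t i) then c else 0))].

From HB Require Import structures.
From mathcomp Require Import all_boot all_order all_algebra.
From mathcomp Require Import reals.
From Stdlib Require Import Classical.
Import Order.TTheory GRing.Theory Num.Theory.
Local Open Scope ring_scope.

(* Tokens never disappear, so some node v holds a token infinitely often.
   If an out-neighbour u of v were visited only finitely often, then from
   some time N on v never passes to u, so the weight B of the edge (v, u)
   freezes.  Every later pass from v then uses an edge of weight at most B,
   and so raises the capped load sum_x min(W(v, x), B + c) by exactly c:
   impossible infinitely often for a bounded nondecreasing quantity.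
   Strong connectivity spreads "visited infinitely often" to every node. *)

Definition inf_often (P : nat -> Prop) : Prop :=
  forall N, exists2 t, (N <= t)%N & P t.

Lemma not_inf_often {P : nat -> Prop} :
  ~ inf_often P -> exists N, forall t, (N <= t)%N -> ~ P t.
Proof.
move=> P_rare; apply: NNPP => P_recurs; apply: P_rare => N.
apply: NNPP => no_t; apply: P_recurs; exists N => t le_Nt Pt.
by apply: no_t; exists t.
Qed.

Lemma fin_exists_bounded {V : finType} {P : V -> nat -> Prop} :
  (forall v, exists t, P v t) -> exists T, forall v, exists2 t, (t <= T)%N & P v t.
Proof.
move=> /fin_all_exists [f Pf]; exists (\max_v f v)%N => v.
by exists (f v); [apply: leq_bigmax | apply: Pf].
Qed.

Lemma inf_often_mem {V : finType} {S : nat -> {set V}} :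
  (forall t, S t != set0) -> exists v, inf_often (fun t => v \in S t).
Proof.
move=> S_neq0; apply: NNPP => none_often.
have eventually_absent v : exists N, forall t, (N <= t)%N -> v \notin S t.
  have [N absent] := not_inf_often (fun v_often => none_often (ex_intro _ v v_often)).
  by exists N => t /absent /negP.
have [N absentN] := fin_exists_bounded eventually_absent.
have /set0Pn [v vSN] := S_neq0 N.
by have [t le_tN /(_ N le_tN)] := absentN v; rewrite vSN.
Qed.

Lemma nondecreasing_bounded_jumps_finite {R : archiRealFieldType} {f : nat -> R} {M c : R} :
  0 < c -> (forall t, f t <= f t.+1) -> (forall t, f t <= M) ->
  ~ inf_often (fun t => f t + c <= f t.+1).
Proof.
move=> c_gt0 f_nondecr f_le_M jumps.
have f_homo : {homo f : s t / (s <= t)%N >-> s <= t}.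
  exact: homo_leq (@lexx _ _) (@le_trans _ _) f_nondecr.
have climb k : exists t, f 0%N + c *+ k <= f t.
  elim: k => [|k [t ft]]; first by exists 0%N; rewrite addr0.
  have [s le_ts jump] := jumps t; exists s.+1; apply: le_trans jump.
  by rewrite mulrS addrCA [leLHS]addrC lerD2r (le_trans ft) ?f_homo.
have [t ft] := climb (Num.bound ((M - f 0%N) / c)).
have gap_ge0 : 0 <= (M - f 0%N) / c by rewrite divr_ge0 ?subr_ge0 // ltW.
move: (archi_boundP gap_ge0); rewrite ltr_pdivrMr // mulr_natl ltrBlDl.
by move=> /lt_le_trans /(_ ft); rewrite ltNge f_le_M.
Qed.

Lemma connect_propagate {V : finType} {E : rel V} {P : V -> Prop} :
  (forall x y, P x -> E x y -> P y) -> forall x y, connect E x y -> P x -> P y.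
Proof.
move=> P_closed x y /connectP [p]; elim: p x => [|z p IH] x /=; first by move=> _ ->.
by case/andP=> Exz z_path y_last Px; apply: IH z_path y_last (P_closed x z Px Exz).
Qed.

Section TokenRun.
Local Set Implicit Arguments.
Local Unset Strict Implicit.

Variables (R : realType) (V : finType) (E : rel V) (c : R).
Variables (W : nat -> V -> V -> R) (S : nat -> {set V}) (nxt : nat -> V -> V).
Hypothesis c_gt0 : 0 < c.
Hypothesis nxt_min : forall t v, v \in S t ->
  E v (nxt t v) /\ (forall u, E v u -> W t v (nxt t v) <= W t v u).
Hypothesis S_succ : forall t, S t.+1 = [set nxt t v | v in S t].
Hypothesis W_succ : forall t i j,
  W t.+1 i j = W t i j + (if (i \in S t) && (j == nxt t i) then c else 0).

Lemma token_set_neq0 t : S 0%N != set0 -> S t != set0.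
Proof. by move=> S0_neq0; elim: t => // t IH; rewrite S_succ imset_eq0. Qed.

Lemma weight_nondecreasing t i j : W t i j <= W t.+1 i j.
Proof. by rewrite W_succ lerDl; case: ifP => _ //; apply: ltW. Qed.

Lemma weight_stable N v u :
  (forall t, (N <= t)%N -> v \in S t -> nxt t v != u) ->
  forall t, (N <= t)%N -> W t v u = W N v u.
Proof.
move=> v_avoids_u t /subnK <-; elim: (t - N)%N => [|k IH] //.
rewrite addSn W_succ IH; case: ifP => [/andP [vSt /eqP u_nxt] | _]; last by rewrite addr0.
by move: (v_avoids_u _ (leq_addl k N) vSt); rewrite u_nxt eqxx.
Qed.

Definition capped_load (v : V) (b : R) (t : nat) : R :=
  \sum_x Num.min (W t v x) b.

Lemma capped_load_nondecreasing v b t : capped_load v b t <= capped_load v b t.+1.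
Proof.
apply: ler_sum => x _.
by rewrite le_min !ge_min lexx orbT andbT weight_nondecreasing.
Qed.

Lemma capped_load_le v b t : capped_load v b t <= b *+ #|V|.
Proof. by rewrite -sumr_const; apply: ler_sum => x _; rewrite ge_min lexx orbT. Qed.

Lemma capped_load_jump v b t : v \in S t -> W t v (nxt t v) + c <= b ->
  capped_load v b t + c <= capped_load v b t.+1.
Proof.
move=> vSt jump_le_b; rewrite /capped_load.
rewrite (bigD1 (nxt t v)) //= [leRHS](bigD1 (nxt t v)) //=.
have -> : W t.+1 v (nxt t v) = W t v (nxt t v) + c by rewrite W_succ vSt eqxx.
have /min_idPl -> := jump_le_b.
have /min_idPl -> : W t v (nxt t v) <= b.
  by apply: le_trans jump_le_b; rewrite lerDl ltW.
rewrite addrAC lerD2l; apply: ler_sum => x _.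
by rewrite le_min !ge_min lexx orbT andbT weight_nondecreasing.
Qed.

Lemma inf_often_out_neighbour v u :
  inf_often (fun t => v \in S t) -> E v u -> inf_often (fun t => u \in S t).
Proof.
move=> v_often Evu; apply: NNPP => /not_inf_often [N u_absent].
have v_avoids_u t : (N <= t)%N -> v \in S t -> nxt t v != u.
  move=> le_Nt vSt; apply/eqP => u_nxt; apply: (u_absent t.+1 (leqW le_Nt)).
  by rewrite S_succ -u_nxt imset_f.
pose b := W N v u + c.
apply: (nondecreasing_bounded_jumps_finite c_gt0
  (capped_load_nondecreasing v b) (capped_load_le v b)) => M.
have [t le_t vSt] := v_often (maxn N M).
exists t; first exact: leq_trans (leq_maxr N M) le_t.
have [_ nxt_le] := nxt_min vSt.
apply: (capped_load_jump vSt); rewrite lerD2r.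
rewrite -(weight_stable v_avoids_u (leq_trans (leq_maxl N M) le_t)).
exact: nxt_le.
Qed.

End TokenRun.

Theorem lemma4p3 (R : realType) (V : finType) (E : rel V) (a : V -> V -> R)
  (c : R) (S0 : {set V}) (W : nat -> V -> V -> R) (S : nat -> {set V})
  (nxt : nat -> V -> V) :
  strongly_connected E -> positive_weights E a -> 0 < c -> S0 != set0 ->
  token_run E a c S0 W S nxt ->
  exists T : nat, forall v : V, exists2 t : nat, (t <= T)%N & v \in S t.
Proof.
move=> E_sc _ c_gt0 S0_neq0 [_ S_0 nxt_min S_succ W_succ].
have S_neq0 t : S t != set0 by apply: (token_set_neq0 S_succ); rewrite S_0.
have [v0 v0_often] := inf_often_mem S_neq0.
have all_often v : inf_often (fun t => v \in S t).
  have [<- //|v0_neq_v] := eqVneq v0 v.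
  apply: (connect_propagate (P := fun x => inf_often (fun t => x \in S t)))
    (E_sc _ _ v0_neq_v) v0_often => x y x_often Exy.
  exact: (inf_often_out_neighbour c_gt0 nxt_min S_succ W_succ x_often Exy).
have visited v : exists t, v \in S t by have [t _ vSt] := all_often v 0%N; exists t.
by have [T T_bounds] := fin_exists_bounded visited; exists T.
Qed.
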